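(* Let $E\to M$ be a vector bundle of rank at least $n$ equipped with a pseudo-metric $\langle\cdot,\cdot\rangle$ (a nondegenerate symmetric bilinear form). Let $\widehat{u}^1,\dots,\widehat{u}^n\in\Gamma(E)$ be linearly independent over $C^\infty(M)$, and let $\widehat{Z}_1,\dots,\widehat{Z}_n$ be covariant differential operators on $E$ with symbols $\widehat{z}_1,\dots,\widehat{z}_n\in\Gamma(TM)$ satisfying $\langle\widehat{Z}_i(e_1),e_2\rangle+\langle e_1,\widehat{Z}_i(e_2)\rangle=\widehat{z}_i\langle e_1,e_2\rangle$ for all $e_1,e_2\in\Gamma(E)$ and all $i$. Define $$a_E(e)=\sum_i\langle e,\widehat{u}^i\rangle\widehat{z}_i,\quad \mathcal{D}(f)=\sum_i\widehat{z}_i(f)\,\widehat{u}^i,\quad \nabla_{e_1}e_2=\sum_i\langle e_1,\widehat{u}^i\rangle\widehat{Z}_i(e_2),\quad \Delta_{e_2}e_1=\sum_i\langle\widehat{Z}_i(e_1),e_2\rangle\widehat{u}^i,$$ $$e_1\circ e_2=\nabla_{e_1}e_2-\nabla_{e_2}e_1+\Delta_{e_2}e_1=\sum_i\Big(\langle e_1,\widehat{u}^i\rangle\widehat{Z}_i(e_2)-\langle e_2,\widehat{u}^i\rangle\widehat{Z}_i(e_1)+\langle \widehat{Z}_i(e_1),e_2\rangle\widehat{u}^i\Big).$$ Suppose there are functions $C_{ik}^j\in C^\infty(M)$ such that for all $i,j\in\{1,\dots,n\}$: $$\widehat{Z}_i(\widehat{u}^j)=\sum_k C_{ik}^j\widehat{u}^k,\qquad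 \langle\widehat{u}^i,\widehat{u}^j\rangle=0,\qquad [\widehat{Z}_i,\widehat{Z}_j]=\sum_k\big(C_{ji}^k-C_{ij}^k\big)\widehat{Z}_k.$$ Then for all $e_1,e_2,e_3\in\Gamma(E)$, $$C^\nabla(e_1,e_2)e_3=\nabla_{\Delta_{e_3}e_2}e_1=Q(e_1,e_2,e_3)=\big(\mathcal{D}\langle e_1,e_3\rangle\big)\circ e_2=0,$$ and $(E,\langle\cdot,\cdot\rangle,\circ,a_E)$ is a Courant algebroid.
   Context: A covariant differential operator on $E$ is an $\mathbb{R}$-linear map $\widehat{Z}:\Gamma(E)\to\Gamma(E)$ with a vector field $\widehat{z}$ (its symbol) such that $\widehat{Z}(fe)=f\widehat{Z}(e)+\widehat{z}(f)e$; the commutator $[\widehat{Z}_i,\widehat{Z}_j]=\widehat{Z}_i\widehat{Z}_j-\widehat{Z}_j\widehat{Z}_i$. Note $\langle\mathcal{D}(f),e\rangle=a_E(e)(f)$. The Courant curvature is $C^\nabla(e_1,e_2)=\nabla_{e_1}\nabla_{e_2}-\nabla_{e_2}\nabla_{e_1}-\nabla_{e_1\circ e_2}$ (an operator on $\Gamma(E)$), and $Q(e_1,e_2,e_3)\in\Gamma(E)$ is defined by $\langle Q(e_1,e_2,e_3),t\rangle=\langle C^\nabla(e_1,t)e_2,e_3\rangle+\langle C^\nabla(e_2,t)e_3,e_1\rangle+\langle C^\nabla(e_3,t)e_1,e_2\rangle$ for all $t\in\Gamma(E)$. A Courant algebroid $(E,\langle\cdot,\cdot\rangle,\circ,a_E)$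 consists of a pseudo-metric bundle, a bundle map $a_E:E\to TM$ and an $\mathbb{R}$-bilinear bracket $\circ$ on $\Gamma(E)$ such that (i) $a_E(e)\langle h_1,h_2\rangle=\langle e\circ h_1,h_2\rangle+\langle h_1,e\circ h_2\rangle$, (ii) $e\circ e=\tfrac12\mathcal{D}\langle e,e\rangle$ where $\langle\mathcal{D}f,e\rangle=a_E(e)(f)$, and (iii) $e_1\circ(e_2\circ e_3)=(e_1\circ e_2)\circ e_3+e_2\circ(e_1\circ e_3)$, for all sections. *)

(* Algebraic model of the smooth setting:
   A       = C^oo(M), a commutative R-algebra;
   V       = Gamma(E), an A-module;
   vector fields = R-linear derivations z : A -> A of A (Gamma(TM) = Der(C^oo(M)));
   g       = the pseudo-metric, an A-valued symmetric A-bilinear nondegenerate form. *)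
From HB Require Import structures.
From mathcomp Require Import all_boot all_order all_algebra.
Set Implicit Arguments. Unset Strict Implicit. Unset Printing Implicit Defensive.
Import Order.TTheory GRing.Theory Num.Theory.
Local Open Scope ring_scope.

Definition is_vector_field (R : realFieldType) (A : comAlgType R) (z : A -> A) :=
  [/\ forall f h : A, z (f + h) = z f + z h,
      forall (c : R) (f : A), z (c *: f) = c *: z f
    & forall f h : A, z (f * h) = f * z h + z f * h].

Definition is_cdo (R : realFieldType) (A : comAlgType R) (V : lmodType A)
    (Z : V -> V) (z : A -> A) :=
  [/\ is_vector_field z,
      forall e1 e2 : V, Z (e1 + e2) = Z e1 + Z e2,
      forall (c : R) (e : V), Z (c%:A *: e) = c%:A *: Z e
    & forall (f : A) (e : V), Z (f *: e) = f *: Z e + z f *: e].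

Definition pseudo_metric (R : realFieldType) (A : comAlgType R) (V : lmodType A)
    (g : V -> V -> A) :=
  [/\ forall e1 e2, g e1 e2 = g e2 e1,
      forall e1 e2 e3, g (e1 + e2) e3 = g e1 e3 + g e2 e3,
      forall (f : A) e1 e2, g (f *: e1) e2 = f * g e1 e2
    & forall e, (forall t, g e t = 0) -> e = 0].

Definition bundle_map (R : realFieldType) (A : comAlgType R) (V : lmodType A)
    (a : V -> A -> A) :=
  [/\ forall e, is_vector_field (a e),
      forall e1 e2 f, a (e1 + e2) f = a e1 f + a e2 f
    & forall (h : A) e f, a (h *: e) f = h * a e f].

Definition R_bilinear (R : realFieldType) (A : comAlgType R) (V : lmodType A)
    (br : V -> V -> V) :=
  [/\ forall e1 e2 e3, br (e1 + e2) e3 = br e1 e3 + br e2 e3,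
      forall e1 e2 e3, br e1 (e2 + e3) = br e1 e2 + br e1 e3,
      forall (c : R) e1 e2, br (c%:A *: e1) e2 = c%:A *: br e1 e2
    & forall (c : R) e1 e2, br e1 (c%:A *: e2) = c%:A *: br e1 e2].

(* Courant algebroid (E, <.,.>, o, a_E); D is the operator determined
   (uniquely, by nondegeneracy) by <D f, e> = a_E(e)(f). *)
Definition courant_algebroid (R : realFieldType) (A : comAlgType R) (V : lmodType A)
    (g : V -> V -> A) (br : V -> V -> V) (a : V -> A -> A) (D : A -> V) :=
  pseudo_metric g /\ bundle_map a /\ R_bilinear br /\
  (forall (f : A) (e : V), g (D f) e = a e f) /\
  (forall e h1 h2, a e (g h1 h2) = g (br e h1) h2 + g h1 (br e h2)) /\
  (forall e, br e e = ((2 : R)^-1)%:A *: D (g e e)) /\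
  (forall e1 e2 e3, br e1 (br e2 e3) = br (br e1 e2) e3 + br e2 (br e1 e3)).

Definition anchorE (R : realFieldType) (A : comAlgType R) (V : lmodType A) (n : nat)
    (g : V -> V -> A) (u : 'I_n -> V) (z : 'I_n -> A -> A) (e : V) (f : A) : A :=
  \sum_(i < n) g e (u i) * z i f.

Definition Dop (R : realFieldType) (A : comAlgType R) (V : lmodType A) (n : nat)
    (u : 'I_n -> V) (z : 'I_n -> A -> A) (f : A) : V :=
  \sum_(i < n) z i f *: u i.

Definition nablaE (R : realFieldType) (A : comAlgType R) (V : lmodType A) (n : nat)
    (g : V -> V -> A) (u : 'I_n -> V) (Z : 'I_n -> V -> V) (e1 e2 : V) : V :=
  \sum_(i < n) g e1 (u i) *: Z i e2.

Definition DeltaE (R : realFieldType) (A : comAlgType R) (V : lmodType A) (n : nat)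
    (g : V -> V -> A) (u : 'I_n -> V) (Z : 'I_n -> V -> V) (e2 e1 : V) : V :=
  \sum_(i < n) g (Z i e1) e2 *: u i.

Definition circE (R : realFieldType) (A : comAlgType R) (V : lmodType A) (n : nat)
    (g : V -> V -> A) (u : 'I_n -> V) (Z : 'I_n -> V -> V) (e1 e2 : V) : V :=
  nablaE g u Z e1 e2 - nablaE g u Z e2 e1 + DeltaE g u Z e2 e1.

Definition courant_curv (V : zmodType)
    (nabla : V -> V -> V) (br : V -> V -> V) (e1 e2 e3 : V) : V :=
  nabla e1 (nabla e2 e3) - nabla e2 (nabla e1 e3) - nabla (br e1 e2) e3.

(* <Q(e1,e2,e3), t> *)
Definition Q_pair (R : realFieldType) (A : comAlgType R) (V : lmodType A)
    (g : V -> V -> A) (nabla : V -> V -> V) (br : V -> V -> V) (e1 e2 e3 t : V) : A :=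
  g (courant_curv nabla br e1 t e2) e3 + g (courant_curv nabla br e2 t e3) e1
  + g (courant_curv nabla br e3 t e1) e2.

(* Split the bracket as e o t = nabla_e t - tau_e t, where
   nabla_e = sum_i <e, u^i> Z_i and tau_e = sum_i u^i /\ Z_i e, with
   (x /\ y) t = <x, t> y - <y, t> x.  Both are metric derivations (tau_e is
   C^oo(M)-linear and skew), which gives axiom (i) and the Leibniz rule
   D (x /\ y) = D x /\ y + x /\ D y on wedges.  The commutator relation of
   the Z_i shows that <e1 o e2, u^k> are exactly the frame coefficients of
   [nabla_e1, nabla_e2], so C^nabla = 0 and hence Q = 0; isotropy of the u^i
   kills nabla along Delta and along D f.  Given C^nabla = 0, the Jacobi
   identity is equivalent to
     tau_(e1 o e2) = [nabla_e1, tau_e2] - [nabla_e2, tau_e1] - [tau_e1, tau_e2],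
   which follows from the Leibniz rule on wedges, from e o u^k = sum_i a_ik u^i
   with a_ik the coefficients of [Z_i, nabla_e], and from the vanishing of
   double sums sum_ij s_ij u^i /\ u^j whose coefficients are symmetric by the
   commutator relation; the same mechanism gives (D f) o e = 0. *)

From HB Require Import structures.
From mathcomp Require Import all_boot all_order all_algebra.
From mathcomp Require Import ring.
Set Implicit Arguments. Unset Strict Implicit. Unset Printing Implicit Defensive.
Import Order.TTheory GRing.Theory Num.Theory.
Local Open Scope ring_scope.

(* Proves an identity in an abelian group when, once everything is moved to
   one side and flattened, every summand cancels against its opposite. *)
Ltac cancel_terms :=
  apply/eqP; rewrite -subr_eq0; apply/eqP; rewrite ?(opprD, opprK, addrA);
  do 60? (match goal with |- ?S + ?x = 0 =>
    repeat first [ rewrite subrK | rewrite addrK | rewrite addNr | rewrite subrr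
                 | rewrite (addrAC _ _ x) ] end);
  rewrite ?add0r ?addr0 ?subrr ?addNr; try done.

Section SkewDoubleSum.
Variables (R : numFieldType) (A : lalgType R) (V : lmodType A) (I : finType).

Lemma double_sum_skew_eq0 (s : I -> I -> A) (w : I -> I -> V) :
  (forall i j, w i j = - w j i) -> (forall i j, (s i j - s j i) *: w i j = 0) ->
  \sum_i \sum_j s i j *: w i j = 0.
Proof.
move=> w_skew s_sym; set S := (X in X = 0).
have S_opp : S = - S.
  transitivity (\sum_i \sum_j s j i *: w i j).
    apply: eq_bigr => i _; apply: eq_bigr => j _.
    by apply/eqP; rewrite -subr_eq0 -scalerBl s_sym.
  rewrite exchange_big -sumrN; apply: eq_bigr => i _; rewrite -sumrN.
  by apply: eq_bigr => j _; rewrite (w_skew j i) scalerN.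
have half : ((2 : R)^-1 + 2^-1)%:A = 1 :> A.
  by rewrite -[2^-1]mul1r -splitr; apply: scale1r.
have S_double : S + S = 0 by rewrite {1}S_opp addNr.
by rewrite -[S]scale1r -half !scalerDl -scalerDr S_double scaler0.
Qed.

End SkewDoubleSum.

Section SymmetricForm.
Variables (R : realFieldType) (A : comAlgType R) (V : lmodType A) (g : V -> V -> A).
Hypotheses (gC : forall e1 e2, g e1 e2 = g e2 e1)
  (gDl : forall e1 e2 e3, g (e1 + e2) e3 = g e1 e3 + g e2 e3)
  (gZl : forall (f : A) e1 e2, g (f *: e1) e2 = f * g e1 e2).

Lemma g_linearl t : linear_for *%R (g^~ t).
Proof. by move=> f x y; rewrite gDl gZl. Qed.

Lemma g_linearr x : linear_for *%R (g x).
Proof. by move=> f y t; rewrite gC gDl gZl !(gC x). Qed.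

HB.instance Definition _ :=
  bilinear_isBilinear.Build A V V A *%R *%R g (conj g_linearl g_linearr).

Fact wedge_key : unit. Proof. exact: tt. Qed.
(* Locked, so that matching against sums and differences never unfolds it. *)
Definition wedge : V -> V -> V -> V :=
  locked_with wedge_key (fun x y t => g x t *: y - g y t *: x).

Lemma wedgeE x y t : wedge x y t = g x t *: y - g y t *: x.
Proof. by rewrite /wedge unlock. Qed.

Lemma wedge_linear x y : linear (wedge x y).
Proof.
move=> f t1 t2; rewrite !wedgeE !linearDr !linearZr_LR /= !scalerDl -!scalerA.
by rewrite scalerBr; cancel_terms.
Qed.

HB.instance Definition _ x y :=
  GRing.isLinear.Build A V V *:%R (wedge x y) (wedge_linear x y).

Lemma wedgeC x y t : wedge x y t = - wedge y x t.
Proof. by rewrite !wedgeE opprB. Qed.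

Lemma wedgeDl x1 x2 y t : wedge (x1 + x2) y t = wedge x1 y t + wedge x2 y t.
Proof. by rewrite !wedgeE linearDl scalerDl scalerDr; cancel_terms. Qed.

Lemma wedgeZl (f : A) x y t : wedge (f *: x) y t = f *: wedge x y t.
Proof. by rewrite !wedgeE linearZl_LR scalerBr !scalerA mulrC. Qed.

Lemma wedgeNl x y t : wedge (- x) y t = - wedge x y t.
Proof. by rewrite -scaleN1r wedgeZl scaleN1r. Qed.

Lemma wedgeBl x1 x2 y t : wedge (x1 - x2) y t = wedge x1 y t - wedge x2 y t.
Proof. by rewrite wedgeDl wedgeNl. Qed.

Lemma wedgeDr x y1 y2 t : wedge x (y1 + y2) t = wedge x y1 t + wedge x y2 t.
Proof. by rewrite wedgeC wedgeDl opprD -!wedgeC. Qed.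

Lemma wedgeZr (f : A) x y t : wedge x (f *: y) t = f *: wedge x y t.
Proof. by rewrite wedgeC wedgeZl -scalerN -wedgeC. Qed.

Lemma wedgeNr x y t : wedge x (- y) t = - wedge x y t.
Proof. by rewrite -scaleN1r wedgeZr scaleN1r. Qed.

Lemma wedgeBr x y1 y2 t : wedge x (y1 - y2) t = wedge x y1 t - wedge x y2 t.
Proof. by rewrite wedgeDr wedgeNr. Qed.

Lemma wedge_suml (I : Type) (r : seq I) (P : pred I) (F : I -> V) y t :
  wedge (\sum_(i <- r | P i) F i) y t = \sum_(i <- r | P i) wedge (F i) y t.
Proof.
apply: (big_morph (fun x => wedge x y t)) => [x1 x2|]; first exact: wedgeDl.
by rewrite !wedgeE linear0l scale0r scaler0 subrr.
Qed.

Lemma wedge_sumr (I : Type) (r : seq I) (P : pred I) (F : I -> V) x t :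
  wedge x (\sum_(i <- r | P i) F i) t = \sum_(i <- r | P i) wedge x (F i) t.
Proof. by rewrite wedgeC wedge_suml -sumrN; apply: eq_bigr => i _; rewrite -wedgeC. Qed.

Lemma wedge_skew x y p q : g (wedge x y p) q = - g p (wedge x y q).
Proof. by rewrite !wedgeE linearBl linearBr !linearZl_LR !linearZr_LR /= !(gC p); ring. Qed.

Lemma wedge_sum_exchange (I J : finType) (x : I -> V) (y : J -> V) (d : I -> J -> A) t :
  \sum_i wedge (x i) (\sum_j d i j *: y j) t = \sum_j wedge (\sum_i d i j *: x i) (y j) t.
Proof.
under eq_bigr do rewrite wedge_sumr.
rewrite exchange_big; apply: eq_bigr => j _; rewrite wedge_suml.
by apply: eq_bigr => i _; rewrite wedgeZl wedgeZr.
Qed.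

Definition metric_derivation (D : V -> V) (d : A -> A) :=
  [/\ {morph D : x y / x + y},
      forall (f : A) e, D (f *: e) = f *: D e + d f *: e
    & forall p q, g (D p) q + g p (D q) = d (g p q)].

Lemma metric_derivation_wedge D d : metric_derivation D d ->
  forall x y t, D (wedge x y t) = wedge (D x) y t + wedge x (D y) t + wedge x y (D t).
Proof.
case=> DD DZ Dg x y t.
have DN e : D (- e) = - D e.
  by apply/eqP; rewrite -addr_eq0 -DD addNr -[0](scale0r 0) DZ !scale0r scaler0 addr0.
rewrite !wedgeE DD DN !DZ -!Dg !scalerDl; cancel_terms.
Qed.

Section Frame.
Variables (n : nat) (u : 'I_n -> V) (Z : 'I_n -> V -> V) (z : 'I_n -> A -> A)
  (C : 'I_n -> 'I_n -> 'I_n -> A).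
Hypothesis Z_cdo : forall i, is_cdo (Z i) (z i).
Hypothesis Z_metric : forall i e1 e2, g (Z i e1) e2 + g e1 (Z i e2) = z i (g e1 e2).
Hypothesis Z_u : forall i j, Z i (u j) = \sum_(k < n) C i k j *: u k.
Hypothesis u_isotropic : forall i j, g (u i) (u j) = 0.
Hypothesis Z_commutator : forall i j e,
  Z i (Z j e) - Z j (Z i e) = \sum_(k < n) (C j i k - C i j k) *: Z k e.

Lemma z_is_nmod_morphism i : nmod_morphism (z i).
Proof.
have [[zD _ _] _ _ _] := Z_cdo i; split=> //.
by apply: (@addrI _ (z i 0)); rewrite -zD !addr0.
Qed.

HB.instance Definition _ i := GRing.isNmodMorphism.Build A A (z i) (z_is_nmod_morphism i).

Lemma Z_is_nmod_morphism i : nmod_morphism (Z i).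
Proof.
have [_ ZD _ _] := Z_cdo i; split=> //.
by apply: (@addrI _ (Z i 0)); rewrite -ZD !addr0.
Qed.

HB.instance Definition _ i := GRing.isNmodMorphism.Build V V (Z i) (Z_is_nmod_morphism i).

Lemma z_scale i (c : R) f : z i (c *: f) = c *: z i f.
Proof. by have [[]] := Z_cdo i. Qed.

Lemma z_leibniz i f h : z i (f * h) = f * z i h + z i f * h.
Proof. by have [[]] := Z_cdo i. Qed.

Lemma Z_leibniz i (f : A) e : Z i (f *: e) = f *: Z i e + z i f *: e.
Proof. by have [] := Z_cdo i. Qed.

Lemma Z_scale_const i (c : R) e : Z i (c%:A *: e) = c%:A *: Z i e.
Proof. by have [] := Z_cdo i. Qed.

Definition ucoord e i := g e (u i).

Definition Zcomb (xi : 'I_n -> A) e := \sum_(i < n) xi i *: Z i e.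

Definition zcomb (xi : 'I_n -> A) f := \sum_(i < n) xi i * z i f.

Lemma Zcomb_is_nmod_morphism xi : nmod_morphism (Zcomb xi).
Proof.
split=> [|x y]; first by rewrite /Zcomb big1 // => i _; rewrite raddf0 scaler0.
by rewrite /Zcomb -big_split; apply: eq_bigr => i _; rewrite raddfD scalerDr.
Qed.

HB.instance Definition _ xi :=
  GRing.isNmodMorphism.Build V V (Zcomb xi) (Zcomb_is_nmod_morphism xi).
HB.instance Definition _ e :=
  GRing.isNmodMorphism.Build V V (nablaE g u Z e) (Zcomb_is_nmod_morphism (ucoord e)).

Lemma Zcomb_metric_derivation xi : metric_derivation (Zcomb xi) (zcomb xi).
Proof.
split=> [x y|f e|p q]; first exact: raddfD.
  rewrite /Zcomb /zcomb scaler_sumr scaler_suml -big_split; apply: eq_bigr => i _.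
  by rewrite Z_leibniz scalerDr !scalerA mulrC.
rewrite /Zcomb /zcomb linear_sumlz linear_sumr -big_split; apply: eq_bigr => i _.
by rewrite /= linearZl_LR linearZr_LR -mulrDr Z_metric.
Qed.

Lemma zcomb_vector_field xi : is_vector_field (zcomb xi).
Proof.
rewrite /zcomb; split=> [f h|c f|f h].
- by rewrite -big_split; apply: eq_bigr => i _; rewrite raddfD mulrDr.
- by rewrite scaler_sumr; apply: eq_bigr => i _; rewrite z_scale scalerAr.
- rewrite mulr_sumr mulr_suml -big_split; apply: eq_bigr => i _ /=.
  by rewrite z_leibniz; ring.
Qed.

Definition comb_bracket (xi eta : 'I_n -> A) k :=
  \sum_(i < n) (xi i * z i (eta k) - eta i * z i (xi k))
  + \sum_(i < n) \sum_(j < n) xi i * eta j * (C j i k - C i j k).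

Lemma Zcomb_Zcomb xi eta e : Zcomb xi (Zcomb eta e) =
  \sum_(i < n) \sum_(j < n) (xi i * eta j) *: Z i (Z j e)
  + \sum_(j < n) (\sum_(i < n) xi i * z i (eta j)) *: Z j e.
Proof.
rewrite /Zcomb.
transitivity (\sum_(i < n) \sum_(j < n) ((xi i * eta j) *: Z i (Z j e)
                 + (xi i * z i (eta j)) *: Z j e)).
  apply: eq_bigr => i _; rewrite raddf_sum /= scaler_sumr; apply: eq_bigr => j _.
  by rewrite Z_leibniz scalerDr !scalerA.
rewrite (eq_bigr _ (fun i _ => big_split _ _ _ _ _)) big_split /=; congr (_ + _).
by rewrite exchange_big; apply: eq_bigr => j _; rewrite scaler_suml.
Qed.

Lemma Zcomb_commutator xi eta e :
  Zcomb xi (Zcomb eta e) - Zcomb eta (Zcomb xi e) = Zcomb (comb_bracket xi eta) e.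
Proof.
rewrite !Zcomb_Zcomb.
have second_order :
    \sum_(i < n) \sum_(j < n) (xi i * eta j) *: Z i (Z j e)
    - \sum_(i < n) \sum_(j < n) (eta i * xi j) *: Z i (Z j e)
  = \sum_(k < n) (\sum_(i < n) \sum_(j < n) xi i * eta j * (C j i k - C i j k)) *: Z k e.
  rewrite [X in _ - X]exchange_big -sumrB.
  transitivity (\sum_(i < n) \sum_(j < n) \sum_(k < n)
                   (xi i * eta j * (C j i k - C i j k)) *: Z k e).
    apply: eq_bigr => i _; rewrite -sumrB; apply: eq_bigr => j _.
    rewrite (mulrC (eta j)) -scalerBr Z_commutator scaler_sumr.
    by apply: eq_bigr => k _; rewrite scalerA.
  symmetry; under eq_bigr do rewrite scaler_suml.
  rewrite exchange_big; apply: eq_bigr => i _.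
  by under eq_bigr do rewrite scaler_suml; rewrite exchange_big.
have first_order :
    \sum_(j < n) (\sum_(i < n) xi i * z i (eta j)) *: Z j e
    - \sum_(j < n) (\sum_(i < n) eta i * z i (xi j)) *: Z j e
  = \sum_(k < n) (\sum_(i < n) (xi i * z i (eta k) - eta i * z i (xi k))) *: Z k e.
  by rewrite -sumrB; apply: eq_bigr => k _; rewrite -scalerBl -sumrB.
rewrite [RHS]/Zcomb /comb_bracket (eq_bigr _ (fun k _ => scalerDl _ _ _)).
by rewrite big_split /= -second_order -first_order opprD addrACA addrC.
Qed.

(* The symbols obey the commutator relation only after acting on sections;
   this is all that is ever needed. *)
Lemma z_commutator_scale i j f (e : V) :
  (z i (z j f) - z j (z i f) - \sum_(k < n) (C j i k - C i j k) * z k f) *: e = 0.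
Proof.
pose c k := C j i k - C i j k.
have comm e' : Z i (Z j e') - Z j (Z i e') = Zcomb c e' := Z_commutator i j e'.
have [_ Zcomb_scale _] := Zcomb_metric_derivation c.
suff leibniz : (z i (z j f) - z j (z i f)) *: e = zcomb c f *: e.
  by rewrite scalerBl leibniz subrr.
apply: (@addrI _ (f *: Zcomb c e)).
rewrite -Zcomb_scale -!comm !Z_leibniz !raddfD /= !Z_leibniz.
by rewrite scalerN scalerBl; cancel_terms.
Qed.

Lemma g_Z_u i e j : g (Z i e) (u j) = z i (ucoord e j) - \sum_(k < n) C i k j * ucoord e k.
Proof.
rewrite /ucoord -(Z_metric i e (u j)) Z_u linear_sumr /=.
by under eq_bigr do rewrite linearZr_LR; rewrite addrK.
Qed.

Lemma ucoord_Delta e2 e1 k : ucoord (DeltaE g u Z e2 e1) k = 0.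
Proof.
by rewrite /ucoord linear_sumlz /= big1 // => i _; rewrite linearZl_LR /= u_isotropic mulr0.
Qed.

Lemma ucoord_Dop f k : ucoord (Dop u z f) k = 0.
Proof.
by rewrite /ucoord linear_sumlz /= big1 // => j _; rewrite linearZl_LR /= u_isotropic mulr0.
Qed.

Lemma nablaE_eq0 e t : (forall i, ucoord e i = 0) -> nablaE g u Z e t = 0.
Proof.
by move=> e_iso; rewrite /nablaE big1 // => i _; rewrite -/(ucoord e i) e_iso scale0r.
Qed.

Lemma ucoord_circ e1 e2 k :
  ucoord (circE g u Z e1 e2) k = comb_bracket (ucoord e1) (ucoord e2) k.
Proof.
have ucoord_nabla e e' : ucoord (nablaE g u Z e e') k =
    \sum_(i < n) ucoord e i * (z i (ucoord e' k) - \sum_(j < n) C i j k * ucoord e' j).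
  by rewrite /ucoord linear_sumlz /=; apply: eq_bigr => i _; rewrite linearZl_LR /= g_Z_u.
rewrite {1}/ucoord /circE linearDl linearBl /= -!/(ucoord _ k).
rewrite !ucoord_nabla ucoord_Delta addr0.
rewrite /comb_bracket; set xi := ucoord e1; set eta := ucoord e2.
transitivity (\sum_(i < n) (xi i * z i (eta k) - eta i * z i (xi k))
  + \sum_(i < n) (eta i * \sum_(j < n) C i j k * xi j - xi i * \sum_(j < n) C i j k * eta j)).
  by rewrite -sumrB -big_split; apply: eq_bigr => i _ /=; ring.
congr (_ + _); rewrite sumrB; under eq_bigr do rewrite mulr_sumr.
under [X in _ - X]eq_bigr do rewrite mulr_sumr.
rewrite [X in X - _]exchange_big -sumrB; apply: eq_bigr => i _.
by rewrite -sumrB; apply: eq_bigr => j _ /=; ring.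
Qed.

Lemma courant_curv_eq0 e1 e2 e3 : courant_curv (nablaE g u Z) (circE g u Z) e1 e2 e3 = 0.
Proof.
rewrite /courant_curv; change (Zcomb (ucoord e1) (Zcomb (ucoord e2) e3)
  - Zcomb (ucoord e2) (Zcomb (ucoord e1) e3) - Zcomb (ucoord (circE g u Z e1 e2)) e3 = 0).
rewrite Zcomb_commutator /Zcomb -sumrB big1 // => k _.
by rewrite ucoord_circ subrr.
Qed.

Definition adZ (xi : 'I_n -> A) i k := z i (xi k) + \sum_(j < n) xi j * (C j i k - C i j k).

Lemma Z_Zcomb i xi e : Z i (Zcomb xi e) = Zcomb xi (Z i e) + Zcomb (adZ xi i) e.
Proof.
have comm : \sum_(j < n) xi j *: (Z i (Z j e) - Z j (Z i e))
          = \sum_(k < n) (\sum_(j < n) xi j * (C j i k - C i j k)) *: Z k e.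
  under eq_bigr do rewrite Z_commutator scaler_sumr.
  rewrite exchange_big; apply: eq_bigr => k _; rewrite scaler_suml.
  by apply: eq_bigr => j _; rewrite scalerA.
rewrite /Zcomb raddf_sum /=.
transitivity (\sum_(j < n) (xi j *: Z j (Z i e) + xi j *: (Z i (Z j e) - Z j (Z i e))
               + z i (xi j) *: Z j e)).
  by apply: eq_bigr => j _; rewrite Z_leibniz scalerBr; cancel_terms.
rewrite !big_split /= comm (eq_bigr _ (fun k _ => scalerDl _ _ _)) big_split /=.
by cancel_terms.
Qed.

Lemma circE_u e k : circE g u Z e (u k) = \sum_(i < n) adZ (ucoord e) i k *: u i.
Proof.
have nabla_u_e : nablaE g u Z (u k) e = 0.
  by rewrite /nablaE big1 // => i _; rewrite u_isotropic scale0r.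
have nabla_e_u : nablaE g u Z e (u k) =
    \sum_(i < n) (\sum_(j < n) ucoord e j * C j i k) *: u i.
  rewrite /nablaE; under eq_bigr do rewrite Z_u scaler_sumr.
  rewrite exchange_big; apply: eq_bigr => i _; rewrite scaler_suml.
  by apply: eq_bigr => j _; rewrite scalerA.
rewrite /circE nabla_u_e subr0 nabla_e_u /DeltaE -big_split; apply: eq_bigr => i _ /=.
rewrite -scalerDl g_Z_u /adZ; congr (_ *: _).
rewrite addrCA; congr (_ + _); rewrite -sumrB.
by apply: eq_bigr => j _; rewrite mulrBr [C i j k * _]mulrC.
Qed.

Lemma nabla_metric_derivation e : metric_derivation (nablaE g u Z e) (anchorE g u z e).
Proof. exact: Zcomb_metric_derivation. Qed.

Definition twist e t := \sum_(i < n) wedge (u i) (Z i e) t.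

Lemma twist_linear e : linear (twist e).
Proof.
move=> f x y; rewrite /twist scaler_sumr -big_split.
by apply: eq_bigr => i _; rewrite linearP.
Qed.

HB.instance Definition _ e := GRing.isLinear.Build A V V *:%R (twist e) (twist_linear e).

Lemma circE_nabla_twist e t : circE g u Z e t = nablaE g u Z e t - twist e t.
Proof.
have nabla_t_e : nablaE g u Z t e = \sum_(i < n) g (u i) t *: Z i e.
  by apply: eq_bigr => i _; rewrite gC.
rewrite /circE /twist; under eq_bigr do rewrite wedgeE.
by rewrite sumrB nabla_t_e /DeltaE; cancel_terms.
Qed.

Lemma twist_metric_derivation e : metric_derivation (twist e) (fun=> 0).
Proof.
split=> [x y|f t|p q]; first exact: raddfD.
  by rewrite linearZ scale0r addr0.
rewrite /twist linear_sumlz linear_sumr /= -big_split big1 // => i _.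
by rewrite /= wedge_skew addNr.
Qed.

Lemma twistDl e1 e2 t : twist (e1 + e2) t = twist e1 t + twist e2 t.
Proof. by rewrite /twist -big_split; apply: eq_bigr => i _; rewrite raddfD wedgeDr. Qed.

Lemma twistNl e t : twist (- e) t = - twist e t.
Proof. by rewrite /twist -sumrN; apply: eq_bigr => i _; rewrite raddfN wedgeNr. Qed.

Lemma twistZl_const (c : R) e t : twist (c%:A *: e) t = c%:A *: twist e t.
Proof.
by rewrite /twist scaler_sumr; apply: eq_bigr => i _; rewrite Z_scale_const wedgeZr.
Qed.

Lemma metric_derivation_twist D d e t : metric_derivation D d ->
  D (twist e t) - twist e (D t) =
  \sum_(i < n) (wedge (D (u i)) (Z i e) t + wedge (u i) (D (Z i e)) t).
Proof.
move=> Dder; have [DD DZ _] := Dder.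
have D0 : D 0 = 0 by rewrite -[0](scale0r 0) DZ !scale0r scaler0 addr0.
rewrite /twist (big_morph D DD D0) -sumrB; apply: eq_bigr => i _.
by rewrite (metric_derivation_wedge Dder); cancel_terms.
Qed.

Lemma twist_u e p : twist e (u p) = - \sum_(j < n) g (Z j e) (u p) *: u j.
Proof.
rewrite /twist -sumrN; apply: eq_bigr => j _.
by rewrite wedgeE u_isotropic scale0r add0r.
Qed.

Lemma twist_nabla e e' t :
  twist (nablaE g u Z e e') t = nablaE g u Z e (twist e' t) - twist e' (nablaE g u Z e t)
    - \sum_(i < n) wedge (twist e (u i)) (Z i e') t.
Proof.
have adZ_part : \sum_(i < n) wedge (u i) (Zcomb (adZ (ucoord e) i) e') t =
    \sum_(k < n) (wedge (nablaE g u Z e (u k)) (Z k e') t - wedge (twist e (u k)) (Z k e') t).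
  rewrite /Zcomb wedge_sum_exchange; apply: eq_bigr => k _.
  by rewrite -circE_u circE_nabla_twist wedgeBl.
have Z_nabla i : Z i (nablaE g u Z e e') =
    nablaE g u Z e (Z i e') + Zcomb (adZ (ucoord e) i) e' := Z_Zcomb i (ucoord e) e'.
rewrite [LHS]/twist; under eq_bigr do rewrite Z_nabla wedgeDr.
rewrite big_split adZ_part sumrB.
rewrite (metric_derivation_twist _ _ (nabla_metric_derivation e)) big_split /=.
by cancel_terms.
Qed.

Lemma twist_comb_u (h : 'I_n -> A) t :
  twist (\sum_(j < n) h j *: u j) t =
  \sum_(i < n) \sum_(j < n) (\sum_(k < n) C i j k * h k + z i (h j)) *: wedge (u i) (u j) t.
Proof.
rewrite /twist; apply: eq_bigr => i _; rewrite raddf_sum /= wedge_sumr.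
transitivity (\sum_(j < n) (h j *: \sum_(k < n) C i k j *: wedge (u i) (u k) t
                            + z i (h j) *: wedge (u i) (u j) t)).
  apply: eq_bigr => j _; rewrite Z_leibniz Z_u wedgeDr !wedgeZr wedge_sumr.
  by congr (_ *: _ + _); apply: eq_bigr => k _; rewrite wedgeZr.
rewrite big_split /= (eq_bigr _ (fun j _ => scalerDl _ _ _)) big_split /=.
congr (_ + _); under eq_bigr do rewrite scaler_sumr.
rewrite exchange_big; apply: eq_bigr => j _; rewrite scaler_suml.
by apply: eq_bigr => k _; rewrite scalerA mulrC.
Qed.

Lemma twist_Delta e1 e2 t : twist (DeltaE g u Z e2 e1) t =
  \sum_(i < n) \sum_(j < n) g (Z j e1) (Z i e2) *: wedge (u i) (u j) t.
Proof.
rewrite /DeltaE twist_comb_u; apply/eqP; rewrite -subr_eq0 -sumrB; apply/eqP.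
under eq_bigr do rewrite -sumrB; under eq_bigr do under eq_bigr do rewrite -scalerBl.
apply: double_sum_skew_eq0 => [i j|i j]; first exact: wedgeC.
rewrite -!Z_metric !addrA !addrK.
have comm : g (Z i (Z j e1)) e2 - g (Z j (Z i e1)) e2 =
    \sum_(k < n) (C j i k - C i j k) * g (Z k e1) e2.
  rewrite -linearBl /= Z_commutator linear_sumlz.
  by apply: eq_bigr => k _; rewrite linearZl_LR.
rewrite opprD addrACA comm -sumrB -big_split /= big1 ?scale0r // => k _.
by ring.
Qed.

Lemma twist_Delta_frame e1 e2 t :
  \sum_(i < n) wedge (twist e2 (u i)) (Z i e1) t
  + \sum_(i < n) wedge (u i) (twist e1 (Z i e2)) t = - twist (DeltaE g u Z e2 e1) t.
Proof.
have twist_Z i : twist e1 (Z i e2) =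
    \sum_(j < n) g (u j) (Z i e2) *: Z j e1 - \sum_(j < n) g (Z j e1) (Z i e2) *: u j.
  by rewrite /twist; under eq_bigr do rewrite wedgeE; rewrite sumrB.
have swap : \sum_(i < n) wedge (twist e2 (u i)) (Z i e1) t =
    - \sum_(i < n) wedge (u i) (\sum_(j < n) g (u j) (Z i e2) *: Z j e1) t.
  under eq_bigr do rewrite twist_u wedgeNl wedge_suml.
  rewrite sumrN exchange_big; congr (- _); apply: eq_bigr => i _.
  by rewrite wedge_sumr; apply: eq_bigr => j _; rewrite wedgeZl wedgeZr gC.
under [X in _ + X]eq_bigr do rewrite twist_Z wedgeBr.
rewrite sumrB swap twist_Delta addrA addNr add0r; congr (- _).
by apply: eq_bigr => i _; rewrite wedge_sumr; apply: eq_bigr => j _; rewrite wedgeZr.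
Qed.

Lemma twist_circ e1 e2 t :
  twist (circE g u Z e1 e2) t =
    (nablaE g u Z e1 (twist e2 t) - twist e2 (nablaE g u Z e1 t))
  - (nablaE g u Z e2 (twist e1 t) - twist e1 (nablaE g u Z e2 t))
  - (twist e1 (twist e2 t) - twist e2 (twist e1 t)).
Proof.
rewrite /circE !twistDl twistNl !twist_nabla.
rewrite -[twist (DeltaE _ _ _ _ _) t]opprK -twist_Delta_frame.
rewrite (metric_derivation_twist _ _ (twist_metric_derivation e1)) big_split /=.
by cancel_terms.
Qed.

Lemma circE_jacobi e1 e2 e3 :
  circE g u Z e1 (circE g u Z e2 e3)
  = circE g u Z (circE g u Z e1 e2) e3 + circE g u Z e2 (circE g u Z e1 e3).
Proof.
have circ_circ e e' e'' : circE g u Z e (circE g u Z e' e'') =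
    nablaE g u Z e (nablaE g u Z e' e'') - nablaE g u Z e (twist e' e'')
    - twist e (nablaE g u Z e' e'') + twist e (twist e' e'').
  by rewrite [circE _ _ _ e' e'']circE_nabla_twist circE_nabla_twist !raddfB /=; cancel_terms.
have curv : nablaE g u Z (circE g u Z e1 e2) e3 =
    nablaE g u Z e1 (nablaE g u Z e2 e3) - nablaE g u Z e2 (nablaE g u Z e1 e3).
  apply/eqP; rewrite eq_sym -subr_eq0.
  by rewrite -[_ - _ - _]/(courant_curv _ _ e1 e2 e3) courant_curv_eq0.
rewrite !circ_circ (circE_nabla_twist (circE g u Z e1 e2)) curv twist_circ.
by cancel_terms.
Qed.

Lemma circE_Dop f e : circE g u Z (Dop u z f) e = 0.
Proof.
rewrite circE_nabla_twist nablaE_eq0 => [|i]; last exact: ucoord_Dop.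
rewrite sub0r /Dop twist_comb_u.
rewrite double_sum_skew_eq0 ?oppr0 // => [i j|i j]; first exact: wedgeC.
rewrite -[RHS](z_commutator_scale i j f (wedge (u i) (u j) e)); congr (_ *: _).
have -> : \sum_(k < n) (C j i k - C i j k) * z k f =
    \sum_(k < n) C j i k * z k f - \sum_(k < n) C i j k * z k f.
  by rewrite -sumrB; apply: eq_bigr => k _; rewrite mulrBl.
by ring.
Qed.

Lemma anchor_bundle_map : bundle_map (anchorE g u z).
Proof.
split=> [e|e1 e2 f|h e f]; first exact: zcomb_vector_field.
  by rewrite /anchorE -big_split; apply: eq_bigr => i _; rewrite gDl mulrDl.
by rewrite /anchorE mulr_sumr; apply: eq_bigr => i _; rewrite gZl mulrA.
Qed.

Lemma circE_R_bilinear : R_bilinear (circE g u Z).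
Proof.
have nablaDl e1 e2 t : nablaE g u Z (e1 + e2) t = nablaE g u Z e1 t + nablaE g u Z e2 t.
  by rewrite /nablaE -big_split; apply: eq_bigr => i _; rewrite gDl scalerDl.
have nablaZl (f : A) e t : nablaE g u Z (f *: e) t = f *: nablaE g u Z e t.
  by rewrite /nablaE scaler_sumr; apply: eq_bigr => i _; rewrite gZl scalerA.
have nablaZr (c : R) e t : nablaE g u Z e (c%:A *: t) = c%:A *: nablaE g u Z e t.
  by rewrite /nablaE scaler_sumr; apply: eq_bigr => i _; rewrite Z_scale_const !scalerA mulrC.
split=> [e1 e2 t|e t1 t2|c e t|c e t]; rewrite !circE_nabla_twist.
- by rewrite nablaDl twistDl; cancel_terms.
- by rewrite !raddfD /=; cancel_terms.
- by rewrite nablaZl twistZl_const scalerBr.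
- by rewrite nablaZr linearZ scalerBr.
Qed.

Lemma g_Dop f e : g (Dop u z f) e = anchorE g u z e f.
Proof.
by rewrite /Dop linear_sumlz; apply: eq_bigr => i _; rewrite /= linearZl_LR gC mulrC.
Qed.

Lemma anchor_g_circE e h1 h2 :
  anchorE g u z e (g h1 h2) = g (circE g u Z e h1) h2 + g h1 (circE g u Z e h2).
Proof.
have [_ _ nabla_g] := nabla_metric_derivation e.
have [_ _ twist_g] := twist_metric_derivation e.
have twist_skew : g (twist e h1) h2 = - g h1 (twist e h2).
  by apply/eqP; rewrite -addr_eq0 twist_g.
rewrite !circE_nabla_twist linearBl linearBr /= twist_skew -nabla_g opprK.
by cancel_terms.
Qed.

Lemma circE_diag e : circE g u Z e e = ((2 : R)^-1)%:A *: Dop u z (g e e).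
Proof.
have half : (2 : R)^-1 + 2^-1 = 1 by rewrite -[2^-1]mul1r -splitr.
rewrite /circE subrr add0r /DeltaE /Dop scaler_sumr; apply: eq_bigr => i _.
rewrite -Z_metric (gC e (Z i e)) scalerA mulrDr -mulrDl -scalerDl half.
by rewrite scale1r mul1r.
Qed.

Lemma frame_curvatures_eq0 e1 e2 e3 :
  [/\ courant_curv (nablaE g u Z) (circE g u Z) e1 e2 e3 = 0,
      nablaE g u Z (DeltaE g u Z e3 e2) e1 = 0,
      forall t, Q_pair g (nablaE g u Z) (circE g u Z) e1 e2 e3 t = 0
    & circE g u Z (Dop u z (g e1 e3)) e2 = 0].
Proof.
split=> [||t|]; first exact: courant_curv_eq0.
- by apply: nablaE_eq0 => i; apply: ucoord_Delta.
- by rewrite /Q_pair !courant_curv_eq0 !linear0l !addr0.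
- exact: circE_Dop.
Qed.

Lemma frame_courant_algebroid :
  pseudo_metric g -> courant_algebroid g (circE g u Z) (anchorE g u z) (Dop u z).
Proof.
move=> g_pseudo_metric; split=> //; split; first exact: anchor_bundle_map.
split; first exact: circE_R_bilinear.
split; first exact: g_Dop.
split; first exact: anchor_g_circE.
split; first exact: circE_diag.
exact: circE_jacobi.
Qed.

End Frame.
End SymmetricForm.

Theorem proposition3p13 (R : realFieldType) (A : comAlgType R) (V : lmodType A)
    (n : nat) (g : V -> V -> A) (u : 'I_n -> V)
    (Z : 'I_n -> V -> V) (z : 'I_n -> A -> A) (C : 'I_n -> 'I_n -> 'I_n -> A) :
  pseudo_metric g ->
  (* u^1, ..., u^n linearly independent over C^oo(M) *)
  (forall c : 'I_n -> A, \sum_(i < n) c i *: u i = 0 -> forall i, c i = 0) ->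
  (forall i, is_cdo (Z i) (z i)) ->
  (forall i e1 e2, g (Z i e1) e2 + g e1 (Z i e2) = z i (g e1 e2)) ->
  (* C i k j stands for C_{ik}^j *)
  (forall i j, Z i (u j) = \sum_(k < n) C i k j *: u k) ->
  (forall i j, g (u i) (u j) = 0) ->
  (forall i j e, Z i (Z j e) - Z j (Z i e) = \sum_(k < n) (C j i k - C i j k) *: Z k e) ->
  (forall e1 e2 e3 : V,
     let nabla := nablaE g u Z in
     let br := circE g u Z in
     [/\ courant_curv nabla br e1 e2 e3 = 0,
         nabla (DeltaE g u Z e3 e2) e1 = 0,
         (forall t, Q_pair g nabla br e1 e2 e3 t = 0)
       & br (Dop u z (g e1 e3)) e2 = 0])
  /\ courant_algebroid g (circE g u Z) (anchorE g u z) (Dop u z).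
Proof.
move=> g_pm _ Z_cdo Z_metric Z_u u_iso Z_comm; have [gC gDl gZl _] := g_pm.
split; first exact: (frame_curvatures_eq0 gC gDl gZl Z_cdo Z_metric Z_u u_iso Z_comm).
exact: (frame_courant_algebroid gC gDl gZl Z_cdo Z_metric Z_u u_iso Z_comm g_pm).
Qed.
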